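(* Let $X,Y,Z$ be random variables on finite alphabets $\mathcal{X},\mathcal{Y},\mathcal{Z}$. For each $y\in\mathcal{Y}$ with $\Pr(Y=y)>0$, let $(A_y,B_y,C_y)$ be the random triple on $\mathcal{X}\times\mathcal{Y}\times\mathcal{Z}$ with $$\Pr(A_y=x,B_y=y',C_y=z)=\begin{cases}0 & \text{if } \Pr(Z=z)=0,\\ \dfrac{\Pr(X=x,Y=y',Z=z)\,\Pr(Z=z\mid Y=y)}{\Pr(Z=z)} & \text{otherwise,}\end{cases}$$ and define the unique information $\operatorname{Un}(X\to Z\mid Y)=\sum_{y:\Pr(Y=y)>0}\Pr(Y=y)\,I(A_y;C_y)$. Then $$\operatorname{Un}(X\to Z\mid Y)=\sum_{y:\Pr(Y=y)>0}\Pr(Y=y)\,H(A_y)-H(X\mid Z).$$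
   Context: $H$ is Shannon entropy and $I$ is mutual information. *)

From HB Require Import structures.
From mathcomp Require Import all_boot all_order all_algebra.
From mathcomp Require Import reals exp.
Set Implicit Arguments. Unset Strict Implicit. Unset Printing Implicit Defensive.
Import Order.TTheory GRing.Theory Num.Theory.
Local Open Scope ring_scope.

Section InfoDefs.
Variable R : realType.

Definition is_distr (T : finType) (p : T -> R) : Prop :=
  (forall t, 0 <= p t) /\ \sum_t p t = 1.

Definition entropy (T : finType) (p : T -> R) : R :=
  - \sum_t (if p t == 0 then 0 else p t * ln (p t)).

Section Triple.
Variables (X Y Z : finType).
Implicit Type P : X * Y * Z -> R.

Definition margX P (x : X) : R := \sum_y \sum_z P (x, y, z).
Definition margY P (y : Y) : R := \sum_x \sum_z P (x, y, z).
Definition margZ P (z : Z) : R := \sum_x \sum_y P (x, y, z).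
Definition margXZ P (xz : X * Z) : R := \sum_y P (xz.1, y, xz.2).
Definition margYZ P (y : Y) (z : Z) : R := \sum_x P (x, y, z).

Definition mutinfoXZ P : R :=
  \sum_x \sum_z
    (if margXZ P (x, z) == 0 then 0
     else margXZ P (x, z) *
          ln (margXZ P (x, z) / (margX P x * margZ P z))).

Definition condentXZ P : R :=
  - \sum_x \sum_z
    (if margXZ P (x, z) == 0 then 0
     else margXZ P (x, z) * ln (margXZ P (x, z) / margZ P z)).

Definition condZY P (y : Y) (z : Z) : R := margYZ P y z / margY P y.

Definition tripleA P (y : Y) (t : X * Y * Z) : R :=
  if margZ P t.2 == 0 then 0
  else P t * condZY P y t.2 / margZ P t.2.

Definition uniqueinfo P : R :=
  \sum_(y | 0 < margY P y) margY P y * mutinfoXZ (tripleA P y).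

End Triple.
End InfoDefs.

(** Write [q_y] for the (X, Z)-marginal of [tripleA P y].  Its Z-marginal is
    [Pr(Z = z | Y = y)], so [q_y] has the same conditional law of X given Z
    as [P].  Hence [I(A_y; C_y) = H(A_y) - H_y(X | Z)] with
    [H_y(X | Z) = - sum q_y(x, z) ln Pr(X = x | Z = z)], and since the
    mixture [sum_y Pr(Y = y) q_y] is the (X, Z)-marginal of [P], the
    [H_y(X | Z)] average to [H(X | Z)]. *)

From HB Require Import structures.
From mathcomp Require Import all_boot all_order all_algebra.
From mathcomp Require Import reals exp.
From mathcomp.algebra_tactics Require Import ring.
Set Implicit Arguments. Unset Strict Implicit. Unset Printing Implicit Defensive.
Import Order.TTheory GRing.Theory Num.Theory.
Local Open Scope ring_scope.

Section Marginals.
Variables (R : realType) (X Y Z : finType).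
Implicit Type Q : X * Y * Z -> R.

Lemma margXE Q x : margX Q x = \sum_z margXZ Q (x, z).
Proof. by rewrite /margX exchange_big. Qed.

Lemma margZE Q z : margZ Q z = \sum_x margXZ Q (x, z).
Proof. by []. Qed.

Definition lncondXZ Q x z : R :=
  if margXZ Q (x, z) == 0 then 0 else ln (margXZ Q (x, z) / margZ Q z).

Lemma condentXZE Q :
  condentXZ Q = - \sum_x \sum_z margXZ Q (x, z) * lncondXZ Q x z.
Proof.
congr (- _); apply: eq_bigr => x _; apply: eq_bigr => z _.
by rewrite /lncondXZ; case: eqP => [->|]; rewrite ?mul0r ?mulr0.
Qed.

Lemma entropy_margXE Q :
  entropy (margX Q) = - \sum_x \sum_z margXZ Q (x, z) * ln (margX Q x).
Proof.
congr (- _); apply: eq_bigr => x _.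
by rewrite -mulr_suml -margXE; case: eqP => // ->; rewrite mul0r.
Qed.

End Marginals.

Section NonnegativeJoint.
Variables (R : realType) (X Y Z : finType) (Q : X * Y * Z -> R).
Hypothesis Q_ge0 : forall t, 0 <= Q t.

Lemma margXZ_ge0 x z : 0 <= margXZ Q (x, z).
Proof. exact: sumr_ge0. Qed.

Lemma margX_gt0 x z : 0 < margXZ Q (x, z) -> 0 < margX Q x.
Proof.
move=> Qxz_gt0; rewrite margXE (bigD1 z) //=.
by rewrite ltr_wpDr // sumr_ge0 // => z' _; apply: margXZ_ge0.
Qed.

Lemma margZ_gt0 x z : 0 < margXZ Q (x, z) -> 0 < margZ Q z.
Proof.
move=> Qxz_gt0; rewrite margZE (bigD1 x) //=.
by rewrite ltr_wpDr // sumr_ge0 // => x' _; apply: margXZ_ge0.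
Qed.

Lemma mutinfoXZ_entropy_condent :
  mutinfoXZ Q = entropy (margX Q) - condentXZ Q.
Proof.
rewrite entropy_margXE condentXZE opprK /mutinfoXZ -sumrN -big_split /=.
apply: eq_bigr => x _; rewrite -sumrN -big_split /=; apply: eq_bigr => z _.
rewrite /lncondXZ; have [->|Qxz_neq0] := eqVneq (margXZ Q (x, z)) 0.
  by rewrite !mul0r oppr0 add0r.
have Qxz_gt0 : 0 < margXZ Q (x, z) by rewrite lt0r Qxz_neq0 margXZ_ge0.
have Qx_gt0 := margX_gt0 Qxz_gt0; have Qz_gt0 := margZ_gt0 Qxz_gt0.
have -> : margXZ Q (x, z) / (margX Q x * margZ Q z) =
          margXZ Q (x, z) / margZ Q z * (margX Q x)^-1.
  by rewrite invfM mulrA mulrAC.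
by rewrite lnM ?posrE ?invr_gt0 ?divr_gt0 // lnV ?posrE // mulrDr mulrN addrC.
Qed.

End NonnegativeJoint.

Section TripleA.
Variables (R : realType) (X Y Z : finType) (P : X * Y * Z -> R).
Hypothesis P_ge0 : forall t, 0 <= P t.

Lemma margY_ge0 y : 0 <= margY P y.
Proof. by apply: sumr_ge0 => x _; apply: sumr_ge0. Qed.

Lemma margZ_ge0 z : 0 <= margZ P z.
Proof. by apply: sumr_ge0 => x _; apply: margXZ_ge0. Qed.

Lemma condZY_ge0 y z : 0 <= condZY P y z.
Proof. by rewrite divr_ge0 ?margY_ge0 ?sumr_ge0. Qed.

Lemma tripleA_ge0 y t : 0 <= tripleA P y t.
Proof.
rewrite /tripleA; case: ifP => // _.
by rewrite divr_ge0 ?margZ_ge0 // mulr_ge0 ?P_ge0 ?condZY_ge0.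
Qed.

Lemma margZ_eq0 z : margZ P z = 0 -> forall x y, P (x, y, z) = 0.
Proof.
move=> Pz0 x y; have Pxz0 : margXZ P (x, z) = 0.
  by apply: (psumr_eq0P _ Pz0) => // x' _; apply: margXZ_ge0.
exact: (psumr_eq0P _ Pxz0).
Qed.

Lemma margY_eq0 y : margY P y = 0 -> forall x z, P (x, y, z) = 0.
Proof.
move=> Py0 x z; have Pxy0 : \sum_z P (x, y, z) = 0.
  by apply: (psumr_eq0P _ Py0) => // x' _; apply: sumr_ge0.
exact: (psumr_eq0P _ Pxy0).
Qed.

Lemma margXZ_tripleA y x z : margXZ (tripleA P y) (x, z) =
  if margZ P z == 0 then 0 else margXZ P (x, z) * condZY P y z / margZ P z.
Proof.
rewrite /margXZ /tripleA /=.
by case: ifP => _; [rewrite big1 | rewrite !mulr_suml].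
Qed.

Lemma margZ_tripleA y z : margZ (tripleA P y) z = condZY P y z.
Proof.
rewrite margZE; under eq_bigr do rewrite margXZ_tripleA.
have [Pz0|Pz_neq0] := eqVneq (margZ P z) 0.
  rewrite big1 // /condZY /margYZ big1 ?mul0r // => x _.
  exact: margZ_eq0.
by rewrite -!mulr_suml -margZE mulrAC divff // mul1r.
Qed.

Lemma lncondXZ_tripleA y x z : margXZ (tripleA P y) (x, z) != 0 ->
  lncondXZ (tripleA P y) x z = lncondXZ P x z.
Proof.
move=> Qxz_neq0; rewrite /lncondXZ (negbTE Qxz_neq0) margZ_tripleA.
have Pz_neq0 : margZ P z != 0.
  by apply: contraNneq Qxz_neq0 => Pz0; rewrite margXZ_tripleA Pz0 eqxx.
rewrite margXZ_tripleA (negbTE Pz_neq0) in Qxz_neq0 *.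
have [Pxz_neq0 Cz_neq0] : margXZ P (x, z) != 0 /\ condZY P y z != 0.
  by split; apply: contraNneq Qxz_neq0 => ->; rewrite !(mul0r, mulr0).
by rewrite (negbTE Pxz_neq0) mulrAC mulfK.
Qed.

Lemma condentXZ_tripleA y : condentXZ (tripleA P y) =
  - \sum_x \sum_z margXZ (tripleA P y) (x, z) * lncondXZ P x z.
Proof.
rewrite condentXZE; congr (- _); apply: eq_bigr => x _; apply: eq_bigr => z _.
have [->|Qxz_neq0] := eqVneq (margXZ (tripleA P y) (x, z)) 0.
  by rewrite !mul0r.
by rewrite lncondXZ_tripleA.
Qed.

(* Because [Pr(Z = z | Y = y)] averages over [y] to [Pr(Z = z)]. *)
Lemma mixture_margXZ_tripleA x z :
  \sum_(y | 0 < margY P y) margY P y * margXZ (tripleA P y) (x, z) =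
  margXZ P (x, z).
Proof.
under eq_bigr do rewrite margXZ_tripleA.
have [Pz0|Pz_neq0] := eqVneq (margZ P z) 0.
  under eq_bigr do rewrite mulr0.
  by rewrite big1_eq /margXZ big1 // => y _; apply: margZ_eq0.
have -> : \sum_(y | 0 < margY P y) margY P y *
            (margXZ P (x, z) * condZY P y z / margZ P z) =
          margXZ P (x, z) / margZ P z *
            \sum_(y | 0 < margY P y) margYZ P y z.
  rewrite mulr_sumr; apply: eq_bigr => y Py_gt0.
  by rewrite /condZY; field; rewrite Pz_neq0 (lt0r_neq0 Py_gt0).
suff -> : \sum_(y | 0 < margY P y) margYZ P y z = margZ P z by rewrite divfK.
rewrite /margZ [RHS]exchange_big big_mkcond /=; apply: eq_bigr => y _.
case: ifP => // /negbT Py_le0; rewrite big1 // => x' _; apply: margY_eq0.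
by apply/eqP; rewrite eq_le margY_ge0 andbT leNgt.
Qed.

Lemma mixture_condentXZ_tripleA :
  \sum_(y | 0 < margY P y) margY P y * condentXZ (tripleA P y) = condentXZ P.
Proof.
rewrite condentXZE; under eq_bigr do rewrite condentXZ_tripleA mulrN.
rewrite sumrN; congr (- _).
under eq_bigr do rewrite mulr_sumr.
rewrite exchange_big; apply: eq_bigr => x _.
under eq_bigr do rewrite mulr_sumr.
rewrite exchange_big; apply: eq_bigr => z _.
by under eq_bigr do rewrite mulrA; rewrite -mulr_suml mixture_margXZ_tripleA.
Qed.

End TripleA.

Theorem corollary1 (R : realType) (X Y Z : finType) (P : X * Y * Z -> R)
  (HP : is_distr P) :
  uniqueinfo P =
  \sum_(y | 0 < margY P y) margY P y * entropy (margX (tripleA P y))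
  - condentXZ P.
Proof.
have P_ge0 := HP.1.
rewrite -(mixture_condentXZ_tripleA P_ge0) -sumrB /uniqueinfo.
apply: eq_bigr => y _.
by rewrite (mutinfoXZ_entropy_condent (tripleA_ge0 P_ge0 y)) mulrBr.
Qed.
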